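(* Consider the bounded-reward setting (all rewards in $[0,1]$, all mean rewards $\mu(s,a)\in(0,1]$). Then: (1) There exist a finite episodic MDP $(\mathcal S,\mathcal A,H,\mathbb P,\mu)$ and a target policy $\pi^+$ such that no reward manipulation attack satisfying the constraint below achieves the attack objective. Here a reward manipulation attack (in expectation) is specified by values $\tilde\mu_h(s,a)$ for all $h\le H$, $s\in\mathcal S$, $a\in\mathcal A$ such that $\tilde\mu_h(s,\pi^+_h(s))=\mu(s,\pi^+_h(s))$ and $\tilde\mu_h(s,a)\in[0,1]$ for $a\neq\pi^+_h(s)$; actions and transitions are not modified; the manipulated values $\tilde V^\pi_h$ are the values of policies in the MDP with transitions $\mathbb P$ and step-$h$ mean rewards $\tilde\mu_h$. (2) There exist a finite episodic MDP and a target policy $\pi^+$ such that no action manipulation attack satisfying the constraint below achieves the attack objective. Here an action manipulation attack is specified by (possibly randomized) maps assigning to each $h\le H$, $s\in\mathcal S$, $a\in\mathcal A$ an executed action $a^o\in\mathcal A$, with $a^o=a$ whenever $a=\pi^+_h(s)$; rewards are not contaminated; when the learner plays $a$ in state $s$ at step $h$, the environment produces mean reward $\mu(s,a^o)$ and next state $s'\sim\mathbb P(\cdot\mid s,a^o)$; the manipulated values $\tilde V^\pi_h$ are the values of policies in this induced environment.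
   Context: An episodic MDP $(\mathcal S,\mathcal A,H,\mathbb P,\mu)$ has finite state set $\mathcal S$, finite action set $\mathcal A$, horizon $H$ (steps per episode), stationary transition kernel $\mathbb P(\cdot\mid s,a)$ and mean reward $\mu(s,a)$. A deterministic policy $\pi=(\pi_1,\dots,\pi_H)$ consists of maps $\pi_h:\mathcal S\to\mathcal A$. The value $V^\pi_h(s)=\mathbb E[\sum_{h'=h}^H \mu(s_{h'},\pi_{h'}(s_{h'}))\mid s_h=s]$, and $\tilde V^\pi_h(s)$ denotes the analogous expected cumulative reward from step $h$ in state $s$ computed in the environment as perceived by the learner under the attack (manipulated rewards and/or manipulated dynamics). The attack objective for a target policy $\pi^+$ is: for all $h\le H$, all $s\in\mathcal S$ and every deterministic policy $\pi$ with $\pi_h(s)\neq\pi^+_h(s)$, one has $\tilde V^\pi_h(s)<\tilde V^{\pi^+}_h(s)$. *)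

From HB Require Import structures.
From mathcomp Require Import all_boot all_order all_algebra.
From mathcomp Require Import reals.
Set Implicit Arguments. Unset Strict Implicit. Unset Printing Implicit Defensive.
Import Order.TTheory GRing.Theory Num.Theory.
Local Open Scope ring_scope.

(* Steps are 0-based: h = 0, ..., H-1 (the paper's h = 1..H). *)

Definition is_kernel (R : realType) (S A : finType) (P : S -> A -> S -> R) : Prop :=
  forall s a, (forall s', 0 <= P s a s') /\ \sum_(s' : S) P s a s' = 1.

Definition bounded_means (R : realType) (S A : finType) (mu : S -> A -> R) : Prop :=
  forall s a, 0 < mu s a <= 1.

Fixpoint val_rem (R : realType) (S A : finType) (r : nat -> S -> A -> R)
  (T : nat -> S -> A -> S -> R) (pi : nat -> S -> A) (k h : nat) (s : S) : R :=
  match k with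
  | 0 => 0
  | k'.+1 => r h s (pi h s)
             + \sum_(s' : S) T h s (pi h s) s' * val_rem r T pi k' h.+1 s'
  end.

Definition value (R : realType) (S A : finType) (H : nat) (r : nat -> S -> A -> R)
  (T : nat -> S -> A -> S -> R) (pi : nat -> S -> A) (h : nat) (s : S) : R :=
  val_rem r T pi (H - h) h s.

Definition attack_objective (R : realType) (S A : finType) (H : nat)
  (r : nat -> S -> A -> R) (T : nat -> S -> A -> S -> R) (pip : nat -> S -> A) : Prop :=
  forall (h : nat) (s : S) (pi : nat -> S -> A), (h < H)%N ->
    pi h s != pip h s -> value H r T pi h s < value H r T pip h s.

Definition valid_reward_attack (R : realType) (S A : finType) (H : nat)
  (mu : S -> A -> R) (pip : nat -> S -> A) (mut : nat -> S -> A -> R) : Prop :=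
  forall (h : nat) (s : S) (a : A), (h < H)%N ->
    (a = pip h s -> mut h s a = mu s a) /\
    (a != pip h s -> 0 <= mut h s a <= 1).

Definition valid_action_attack (R : realType) (S A : finType) (H : nat)
  (pip : nat -> S -> A) (q : nat -> S -> A -> A -> R) : Prop :=
  forall (h : nat) (s : S) (a : A), (h < H)%N ->
    (forall ao, 0 <= q h s a ao) /\ \sum_(ao : A) q h s a ao = 1 /\
    (a = pip h s -> q h s a a = 1).

Definition act_reward (R : realType) (S A : finType) (mu : S -> A -> R)
  (q : nat -> S -> A -> A -> R) : nat -> S -> A -> R :=
  fun h s a => \sum_(ao : A) q h s a ao * mu s ao.

Definition act_trans (R : realType) (S A : finType) (P : S -> A -> S -> R)
  (q : nat -> S -> A -> A -> R) : nat -> S -> A -> S -> R :=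
  fun h s a s' => \sum_(ao : A) q h s a ao * P s ao s'.

(* Reward manipulation: from state 0 the target action keeps the learner in
   state 0, where every reward is 1/2, while any other action moves it to
   state 1, where the target's reward is 1.  Over two steps the target earns
   1/2 + 1/2 = 1; the deviation that leaves state 0 at once earns a manipulated
   reward, which must be nonnegative, and then the unmodifiable target reward 1
   of state 1.  So the deviation never falls strictly below the target.
   Action manipulation: when all actions have the same mean reward, every
   redirection of the learner's action yields that same reward, so no action
   can be made strictly worse than the target one. *)
From HB Require Import structures.
From mathcomp Require Import all_boot all_order all_algebra.
From mathcomp Require Import reals lra.
Import Order.TTheory GRing.Theory Num.Theory.
Local Open Scope ring_scope.

Section DeterministicKernel.
Variables (R : realType) (S A : finType).

Definition det_kernel (f : S -> A -> S) : S -> A -> S -> R :=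
  fun s a s' => (s' == f s a)%:R.

Lemma sum_det_kernel (f : S -> A -> S) s a (g : S -> R) :
  \sum_(s' : S) det_kernel f s a s' * g s' = g (f s a).
Proof.
rewrite /det_kernel (bigD1 (f s a)) //= eqxx mul1r big1 ?addr0 // => s' /negbTE ->.
by rewrite mul0r.
Qed.

Lemma det_kernel_is_kernel (f : S -> A -> S) : is_kernel (det_kernel f).
Proof.
move=> s a; split=> [s'|]; first by rewrite ler0n.
by rewrite -[RHS](sum_det_kernel f s a (fun=> 1)); apply: eq_bigr => s' _; rewrite mulr1.
Qed.

Lemma val_rem_det_kernelS (r : nat -> S -> A -> R) (f : S -> A -> S)
    (pi : nat -> S -> A) k h s :
  val_rem r (fun=> det_kernel f) pi k.+1 h s
  = r h s (pi h s) + val_rem r (fun=> det_kernel f) pi k h.+1 (f s (pi h s)).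
Proof. by rewrite /= sum_det_kernel. Qed.

End DeterministicKernel.

Arguments det_kernel {R S A}.

Section Values.
Variables (R : realType) (S A : finType).

Lemma val_rem1 (r : nat -> S -> A -> R) (T : nat -> S -> A -> S -> R)
    (pi : nat -> S -> A) h s :
  val_rem r T pi 1 h s = r h s (pi h s).
Proof. by rewrite /= big1 ?addr0 // => s' _; rewrite mulr0. Qed.

Lemma attack_objectiveN (H : nat) (r : nat -> S -> A -> R)
    (T : nat -> S -> A -> S -> R) (pip pi : nat -> S -> A) h s :
  (h < H)%N -> pi h s != pip h s ->
  value H r T pip h s <= value H r T pi h s -> ~ attack_objective H r T pip.
Proof. by move=> hH npi le_val /(_ h s pi hH npi); rewrite ltNge le_val. Qed.

Lemma act_reward_const (mu : S -> A -> R) (q : nat -> S -> A -> A -> R) c h s a :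
  (forall a', mu s a' = c) -> \sum_(ao : A) q h s a ao = 1 ->
  act_reward mu q h s a = c.
Proof.
move=> mu_c q1; rewrite /act_reward.
by under eq_bigr do rewrite mu_c; rewrite -mulr_suml q1 mul1r.
Qed.

End Values.

Section Counterexamples.
Variable R : realType.

Definition stay_or_leave (s a : 'I_2) : 'I_2 :=
  if (s == ord0) && (a == ord0) then ord0 else ord_max.

Definition half_then_one (s a : 'I_2) : R := if s == ord0 then 2^-1 else 1.

Definition always0 {S : finType} {n : nat} : nat -> S -> 'I_n.+1 := fun _ _ => ord0.

Lemma half_bounded : 0 < (2^-1 : R) <= 1.
Proof. by rewrite invr_gt0 ltr0n invf_le1 ?ltr0n // ler1n. Qed.

Lemma half_then_one_bounded : bounded_means half_then_one.
Proof.
by move=> s a; rewrite /half_then_one; case: eqP => _; [exact: half_bounded | rewrite ltr01 lexx].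
Qed.

Lemma no_reward_attack_stay_or_leave :
  ~ (exists mut : nat -> 'I_2 -> 'I_2 -> R,
       valid_reward_attack 2 half_then_one always0 mut /\
       attack_objective 2 mut (fun=> det_kernel stay_or_leave) always0).
Proof.
case=> mut [valid_mut].
pose leave_first : nat -> 'I_2 -> 'I_2 := fun h _ => if h == 0%N then ord_max else ord0.
apply: (@attack_objectiveN _ _ _ 2 _ _ _ leave_first 0%N ord0) => //.
rewrite /value !val_rem_det_kernelS /= !addr0.
have target_step0 := (valid_mut 0%N ord0 ord0 isT).1 erefl.
have target_step1 := (valid_mut 1%N ord0 ord0 isT).1 erefl.
have target_after_leave := (valid_mut 1%N ord_max ord0 isT).1 erefl.
have [_ /(_ isT) /andP[leave_ge0 _]] := valid_mut 0%N ord0 ord_max isT.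
rewrite /always0 target_step0 target_step1 target_after_leave /half_then_one /=; lra.
Qed.

Lemma no_action_attack_const_means :
  ~ (exists q : nat -> 'I_1 -> 'I_2 -> 'I_2 -> R,
       valid_action_attack 1 always0 q /\
       attack_objective 1 (act_reward (fun _ _ => 2^-1) q)
         (act_trans (det_kernel (fun _ _ => ord0)) q) always0).
Proof.
case=> q [valid_q].
apply: (@attack_objectiveN _ _ _ 1 _ _ _ (fun _ _ => ord_max) 0%N ord0) => //.
have q_distr a : \sum_(ao : 'I_2) q 0%N ord0 a ao = 1.
  by case: (valid_q 0%N ord0 a isT) => _ [].
by rewrite /value !val_rem1 !(@act_reward_const _ _ _ _ _ 2^-1) ?q_distr.
Qed.

End Counterexamples.

Theorem theorem1 (R : realType) :
  (exists (nS nA H : nat) (P : 'I_nS -> 'I_nA -> 'I_nS -> R)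
          (mu : 'I_nS -> 'I_nA -> R) (pip : nat -> 'I_nS -> 'I_nA),
     is_kernel P /\ bounded_means mu /\
     ~ (exists mut : nat -> 'I_nS -> 'I_nA -> R,
          valid_reward_attack H mu pip mut /\
          attack_objective H mut (fun _ => P) pip))
  /\
  (exists (nS nA H : nat) (P : 'I_nS -> 'I_nA -> 'I_nS -> R)
          (mu : 'I_nS -> 'I_nA -> R) (pip : nat -> 'I_nS -> 'I_nA),
     is_kernel P /\ bounded_means mu /\
     ~ (exists q : nat -> 'I_nS -> 'I_nA -> 'I_nA -> R,
          valid_action_attack H pip q /\
          attack_objective H (act_reward mu q) (act_trans P q) pip)).
Proof.
split.
- exists 2%N, 2%N, 2%N, (det_kernel stay_or_leave), (@half_then_one R), always0.
  split; first exact: det_kernel_is_kernel.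
  by split; [exact: half_then_one_bounded | exact: no_reward_attack_stay_or_leave].
- exists 1%N, 2%N, 1%N, (det_kernel (fun _ _ => ord0)), (fun _ _ => 2^-1), always0.
  split; first exact: det_kernel_is_kernel.
  by split; [move=> _ _; exact: half_bounded | exact: no_action_attack_const_means].
Qed.
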